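(* For hypergraphs $H=(X,E)$ of VC dimension at most $d$, \textsc{Max Partial VC Dimension} is $|E|^{(d-1)/d}$-approximable in polynomial time.
   Context: For a hypergraph $H=(X,E)$ and $C\subseteq X$, the number of equivalence classes induced by $C$ is $|\{e\cap C: e\in E\}|$. The VC dimension of $H$ is the maximum size of a set $C\subseteq X$ such that every subset of $C$ equals $e\cap C$ for some $e\in E$. \textsc{Max Partial VC Dimension}: given $H$ and an integer $k$, find $C\subseteq X$ of size $k$ maximizing the number of induced classes. An $r$-approximation algorithm returns a feasible solution of value at least $opt/r$. *)

From mathcomp Require Import all_boot.
Set Implicit Arguments. Unset Strict Implicit. Unset Printing Implicit Defensive.

(* number of equivalence classes induced by C: |{ e :&: C : e in E }| *)
Definition nb_classes (n : nat) (E : {set {set 'I_n}}) (C : {set 'I_n}) : nat :=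
  #|[set e :&: C | e in E]|.

Definition shattered (n : nat) (E : {set {set 'I_n}}) (C : {set 'I_n}) : bool :=
  [forall D : {set 'I_n}, (D \subset C) ==> [exists e in E, e :&: C == D]].

Definition vc_dim (n : nat) (E : {set {set 'I_n}}) : nat :=
  \max_(C : {set 'I_n} | shattered E C) #|C|.

Definition opt_pvc (n : nat) (E : {set {set 'I_n}}) (k : nat) : nat :=
  \max_(C : {set 'I_n} | #|C| == k) nb_classes E C.

Inductive instr : Type :=
| IConst of nat & nat
| IAdd   of nat & nat & nat
| ISub   of nat & nat & nat
| ILoad  of nat & nat
| IStore of nat & nat
| IJz    of nat & nat
| IHalt.

Definition program := seq instr.
Definition memory := nat -> nat.

Definition upd (m : memory) (r v : nat) : memory :=
  fun i => if i == r then v else m i.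

Definition step (P : program) (pc : nat) (m : memory) : option (nat * memory) :=
  match nth IHalt P pc with
  | IConst r v => Some (pc.+1, upd m r v)
  | IAdd r a b => Some (pc.+1, upd m r (m a + m b))
  | ISub r a b => Some (pc.+1, upd m r (m a - m b))
  | ILoad r a => Some (pc.+1, upd m r (m (m a)))
  | IStore a b => Some (pc.+1, upd m (m a) (m b))
  | IJz a t => Some (if m a == 0 then t else pc.+1, m)
  | IHalt => None
  end.

Fixpoint exec (P : program) (t : nat) (pc : nat) (m : memory) : option memory :=
  match step P pc m with
  | None => Some m
  | Some (pc', m') => if t is t'.+1 then exec P t' pc' m' else None
  end.

(* mem[0] = n, mem[1] = |E|, mem[2] = k, and for j < |E| * n,
   mem[3 + j] = 1 iff vertex (j %% n) belongs to the (j %/ n)-th edge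
   (edges listed in the order enum E); all other registers are 0. *)
Definition encode (n : nat) (E : {set {set 'I_n}}) (k : nat) : memory :=
  fun i =>
    if i == 0 then n else if i == 1 then #|E| else if i == 2 then k else
    let j := i - 3 in
    if j < #|E| * n then
      nat_of_bool [exists x : 'I_n, (val x == j %% n) && (x \in nth set0 (enum E) (j %/ n))]
    else 0.

Definition input_size (n : nat) (E : {set {set 'I_n}}) (k : nat) : nat :=
  3 + n + #|E| * n + k.

Definition decode (n : nat) (m : memory) : {set 'I_n} :=
  [set x : 'I_n | m (val x) != 0].

(* Every set C of size k induces at most |E| classes and, by Pajor's lemma
   (the traces of E on C shatter at least as many subsets of C as there are
   classes, and shattered sets have size at most d), at most (k+1)^d classes.
   A greedy algorithm finds a C of size k that either separates all edges, and
   is then optimal, or induces at least k+1 classes: each vertex it adds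
   separates one more pair of edges with equal traces.  In the latter case
   opt^d = opt * opt^(d-1) <= (k+1)^d * |E|^(d-1).  The greedy algorithm is
   written as a RAM program taking O(|E|^2 n) steps, well within the sixth
   power of the input size. *)

From mathcomp Require Import all_boot zify ring.
From Stdlib Require Import FunctionalExtensionality.
Set Implicit Arguments. Unset Strict Implicit. Unset Printing Implicit Defensive.

Section Shattering.
Variable n : nat.
Implicit Types (F : {set {set 'I_n}}) (A D S T : {set 'I_n}) (x : 'I_n).

Definition shattered_sets F := [set S | shattered F S].

Lemma shatteredP F S :
  reflect (forall D, D \subset S -> exists2 A, A \in F & A :&: S = D) (shattered F S).
Proof.
apply: (iffP forallP) => [shF D sDS | shF D].
  by move: (shF D); rewrite sDS => /existsP [A /andP [FA /eqP AS]]; exists A.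
apply/implyP => /shF [A FA AS]; apply/existsP; exists A; by rewrite FA AS eqxx.
Qed.

Lemma set0_shattered F : F != set0 -> set0 \in shattered_sets F.
Proof.
case/set0Pn => A FA; rewrite inE; apply/shatteredP => D; rewrite subset0 => /eqP ->.
by exists A; rewrite ?setI0.
Qed.

Lemma shattered_sub F S0 T :
  {in F, forall A, A \subset S0} -> T \in shattered_sets F -> T \subset S0.
Proof.
move=> sFS0; rewrite inE => /shatteredP /(_ T (subxx T)) [A FA <-].
exact: subset_trans (subsetIl A T) (sFS0 A FA).
Qed.

(* Pajor's lemma is proved by splitting [F] along a point [x]: the sets
   shattered by [avoid x F :|: contract x F], and those shattered by
   [avoid x F :&: contract x F] with [x] added, are distinct sets shattered
   by [F]. *)
Definition avoid x F := [set A in F | x \notin A].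
Definition contract x F := [set A :\ x | A in F & x \in A].

Lemma card_avoid_contract x F : #|F| = #|avoid x F| + #|contract x F|.
Proof.
rewrite card_in_imset; last first.
  by move=> A B; rewrite !inE => /andP [_ xA] /andP [_ xB] AB; rewrite -(setD1K xA) AB setD1K.
rewrite -(cardsID [set A : {set 'I_n} | x \in A] F) addnC; congr (_ + _).
  by apply: eq_card => A; rewrite /avoid !inE andbC.
by apply: eq_card => A; rewrite !inE andbC.
Qed.

Lemma avoid_contract_sub x F S0 :
  {in F, forall A, A \subset S0} ->
  {in avoid x F :|: contract x F, forall A, A \subset S0 :\ x}.
Proof.
move=> sFS0 A; rewrite /avoid /contract !inE.
case/orP => [/andP [FA xA] | /imsetP [B /[!inE] /andP [FB _] ->]].
  by rewrite subsetD1 xA sFS0.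
exact: setSD (sFS0 B FB).
Qed.

Lemma shattered_avoid_contractU x F T : x \notin T ->
  shattered (avoid x F :|: contract x F) T -> shattered F T.
Proof.
move=> xT /shatteredP shT; apply/shatteredP => D /shT [A].
rewrite /avoid /contract !inE.
case/orP => [/andP [FA _] | /imsetP [B /[!inE] /andP [FB _] ->]] <-; first by exists A.
exists B => //; apply/setP => y; rewrite !inE.
by case: eqVneq => // ->; rewrite (negbTE xT) andbF.
Qed.

Lemma shattered_avoid_contractI x F T : x \notin T ->
  shattered (avoid x F :&: contract x F) T -> shattered F (x |: T).
Proof.
move=> xT /shatteredP shT; apply/shatteredP => D sDxT.
have sDT : D :\ x \subset T.
  by apply/subsetP => y /setD1P [yx /(subsetP sDxT)]; rewrite !inE (negbTE yx).
have [A] := shT _ sDT; rewrite /avoid /contract !inE => /andP [/andP [FA xA]].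
case/imsetP => B /[!inE] /andP [FB xB] AB AT.
have traceU C y : y != x -> (y \in C :&: (x |: T)) = (y \in C :&: T).
  by move=> yx; rewrite !inE (negbTE yx).
have inD y : y != x -> (y \in D) = (y \in A :&: T) by move=> yx; rewrite AT !inE yx.
case xD: (x \in D).
  exists B => //; apply/setP => y; case: (eqVneq y x) => [-> | yx].
    by rewrite !inE eqxx xB xD.
  by rewrite traceU // inD // AB !inE yx.
exists A => //; apply/setP => y; case: (eqVneq y x) => [-> | yx].
  by rewrite !inE (negbTE xA) xD.
by rewrite traceU // inD.
Qed.

Lemma card_le_shattered_in F S0 :
  {in F, forall A, A \subset S0} -> #|F| <= #|shattered_sets F|.
Proof.
have [N] := ubnP #|S0|; elim: N S0 F => // N IH S0 F ltS0N sFS0.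
have [S00 | [x S0x]] := set_0Vmem S0.
  have: F \subset [set set0].
    by apply/subsetP => A /sFS0; rewrite S00 subset0 inE.
  move/subset_leq_card; rewrite cards1; have [-> | /set0_shattered sh0] := eqVneq F set0.
    by rewrite cards0.
  by move/leq_trans; apply; rewrite card_gt0; apply/set0Pn; exists set0.
pose F0 := avoid x F; pose F1 := contract x F.
have ltS0x : #|S0 :\ x| < N by rewrite (cardsD1 x S0) S0x in ltS0N.
have sFU := avoid_contract_sub (x := x) sFS0.
have sFI : {in F0 :&: F1, forall A, A \subset S0 :\ x}.
  by move=> A /setIP [F0A _]; apply: sFU; rewrite inE F0A.
have xnotin (G : {set {set 'I_n}}) T :
    {in G, forall A, A \subset S0 :\ x} -> T \in shattered_sets G -> x \notin T.
  by move=> sG /(shattered_sub sG) /subsetP sT; apply/negP => /sT; rewrite !inE eqxx.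
pose G := [set x |: T | T in shattered_sets (F0 :&: F1)].
have cardG : #|G| = #|shattered_sets (F0 :&: F1)|.
  apply: card_in_imset => T T' shT shT' eqT.
  by rewrite -(setU1K (xnotin _ _ sFI shT)) eqT setU1K // (xnotin _ _ sFI shT').
have disjG : [disjoint shattered_sets (F0 :|: F1) & G].
  apply/pred0P => T /=; apply/negbTE/andP => [[shT /imsetP [U _ TU]]].
  by move: (xnotin _ _ sFU shT); rewrite TU setU11.
have subG : shattered_sets (F0 :|: F1) :|: G \subset shattered_sets F.
  apply/subsetP => T; rewrite inE => /orP [shT | /imsetP [U shU ->]]; rewrite inE.
    by apply: shattered_avoid_contractU (xnotin _ _ sFU shT) _; rewrite inE in shT.
  by apply: shattered_avoid_contractI (xnotin _ _ sFI shU) _; rewrite inE in shU.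
rewrite (card_avoid_contract x) -/F0 -/F1 -cardsUI.
apply: leq_trans (leq_add (IH _ _ ltS0x sFU) (IH _ _ ltS0x sFI)) _.
by rewrite -cardG -cardsUI (disjoint_setI0 disjG) cards0 addn0 subset_leq_card.
Qed.

(* A set of size at most [d] is coded by the [d]-tuple of its elements,
   padded with [None]. *)
Lemma card_small_subsets (d : nat) (C : {set 'I_n}) :
  #|[set T : {set 'I_n} | (T \subset C) && (#|T| <= d)]| <= #|C|.+1 ^ d.
Proof.
set small := [set T | _].
set R : {set option 'I_n} := None |: [set Some y | y in C].
have cardR : #|R| = #|C|.+1.
  rewrite cardsU1 card_imset; last by move=> ? ? [].
  by case: imsetP => // [[y _]].
pose f T : {ffun 'I_d -> option 'I_n} := [ffun i : 'I_d => onth (enum T) i].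
have f_inj : {in small &, injective f}.
  move=> T T'; rewrite !inE => /andP [_ Td] /andP [_ T'd] fTT'.
  rewrite -(set_enum T) -(set_enum T'); suff -> : enum T = enum T' by [].
  apply: eq_from_onth_le => i; rewrite -!cardE leq_max => lti.
  have ltid : i < d by case/orP: lti => /leq_trans; apply.
  by move/ffunP: fTT' => /(_ (Ordinal ltid)); rewrite !ffunE.
rewrite -(card_in_imset f_inj) -cardR.
have -> : #|R| ^ d = #|[set g : {ffun 'I_d -> option 'I_n} | g \in ffun_on R]|.
  by rewrite [RHS]cardsE card_ffun_on card_ord.
apply: subset_leq_card; apply/subsetP => _ /imsetP [T smallT ->].
rewrite inE; apply/ffun_onP => i; rewrite ffunE.
case eq_y: (onth _ _) => [y|]; last by rewrite !inE.
rewrite !inE; apply/orP; right; apply: imset_f.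
move: smallT; rewrite inE => /andP [/subsetP sTC _]; apply: sTC.
by rewrite -mem_enum; apply/onthP; exists i.
Qed.

Lemma shattered_le_vc_dim (E : {set {set 'I_n}}) T : shattered E T -> #|T| <= vc_dim E.
Proof. exact: (leq_bigmax_cond (F := fun T => #|T|)). Qed.

End Shattering.

Section Traces.
Variables (n : nat) (E : {set {set 'I_n}}).
Implicit Types (A B C D T : {set 'I_n}) (x : 'I_n).

Lemma nb_classes_le_card C : nb_classes E C <= #|E|.
Proof. exact: leq_imset_card. Qed.

Lemma traces_of_traces C C' :
  C \subset C' -> [set X :&: C | X in [set A :&: C' | A in E]] = [set A :&: C | A in E].
Proof.
by move=> sCC'; rewrite -imset_comp; apply: eq_imset => A /=; rewrite -setIA (setIidPr sCC').
Qed.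

Lemma subset_leq_nb_classes C C' : C \subset C' -> nb_classes E C <= nb_classes E C'.
Proof. by move=> sCC'; rewrite /nb_classes -(traces_of_traces sCC') leq_imset_card. Qed.

Lemma nb_classes_separate C A B x : A \in E -> B \in E ->
  A :&: C = B :&: C -> A :&: (x |: C) != B :&: (x |: C) ->
  nb_classes E C < nb_classes E (x |: C).
Proof.
move=> EA EB eqAB neqAB; have sCxC := subsetUr [set x] C.
rewrite /nb_classes -(traces_of_traces sCxC) ltn_neqAle leq_imset_card andbT.
apply/imset_injP => inj; move/eqP: neqAB; apply; apply: inj; try exact: imset_f.
by rewrite -!setIA (setIidPr sCxC).
Qed.

Lemma nb_classes_set0 : E != set0 -> nb_classes E set0 = 1.
Proof.
case/set0Pn => A EA; rewrite /nb_classes; apply/eqP/cards1P; exists set0.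
apply/setP => X; rewrite inE; apply/imsetP/eqP => [[B _ ->] | ->]; first by rewrite setI0.
by exists A; rewrite ?setI0.
Qed.

Lemma shattered_traces C T : T \subset C ->
  shattered [set A :&: C | A in E] T -> shattered E T.
Proof.
move=> sTC /shatteredP shT; apply/shatteredP => D /shT [_ /imsetP [A EA ->] <-].
by exists A; rewrite // -setIA (setIidPr sTC).
Qed.

Lemma nb_classes_le_pow d C : vc_dim E <= d -> nb_classes E C <= #|C|.+1 ^ d.
Proof.
move=> vcEd; set G := [set A :&: C | A in E].
have sGC : {in G, forall A, A \subset C} by move=> _ /imsetP [A _ ->]; apply: subsetIr.
apply: leq_trans (card_le_shattered_in sGC) (leq_trans _ (card_small_subsets d C)).
apply/subset_leq_card/subsetP => T shT; have sTC := shattered_sub sGC shT.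
rewrite inE sTC (leq_trans _ vcEd) // shattered_le_vc_dim // (shattered_traces sTC) //.
by rewrite inE in shT.
Qed.

Lemma opt_pvc_le_card k : opt_pvc E k <= #|E|.
Proof. by apply/bigmax_leqP => C _; apply: nb_classes_le_card. Qed.

Lemma opt_pvc_le_pow d k : vc_dim E <= d -> opt_pvc E k <= k.+1 ^ d.
Proof. by move=> vcEd; apply/bigmax_leqP => C /eqP <-; apply: nb_classes_le_pow. Qed.

Lemma partial_vc_approx d k C : 0 < d -> vc_dim E <= d -> #|C| = k ->
  k < nb_classes E C \/ #|E| <= nb_classes E C ->
  opt_pvc E k ^ d <= nb_classes E C ^ d * #|E| ^ (d - 1).
Proof.
move=> d_gt0 vcEd cardC [lt_k_nb | le_E_nb].
  rewrite -[in X in X <= _](subnK d_gt0) addn1 expnS; apply: leq_mul.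
    by apply: leq_trans (opt_pvc_le_pow k vcEd) _; rewrite leq_exp2r.
  by case: (d - 1) => // e; rewrite leq_exp2r // opt_pvc_le_card.
have [E0 | E_gt0] := posnP #|E|.
  by move: (opt_pvc_le_card k); rewrite E0 leqn0 => /eqP ->; rewrite exp0n.
rewrite -[X in X <= _]muln1 leq_mul ?expn_gt0 ?E_gt0 // leq_exp2r //.
exact: leq_trans (opt_pvc_le_card k) le_E_nb.
Qed.

End Traces.

(* The greedy algorithm, in the loop order of the RAM program: for each pair
   [(i, j)] of edges whose traces on [C] coincide, while [|C| < k], add to [C]
   the last vertex outside [C] at which the two edges differ; then pad [C]
   with the smallest missing vertices up to size [k].  Vertex sets are read
   through their characteristic vectors indexed by [nat], as stored in the
   machine memory. *)
Section Greedy.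
Variables (n : nat) (E : {set {set 'I_n}}) (k : nat).
Implicit Types (A B C : {set 'I_n}) (st : {set 'I_n} * nat).

Definition edge i := nth set0 (enum E) i.

Definition bit A (x : nat) : nat := [exists y : 'I_n, (val y == x) && (y \in A)].

Definition set_bit C (x : nat) := [set y | (y \in C) || (val y == x)].

Definition differ_in C A B (X : nat) :=
  [exists y : 'I_n, [&& val y < X, y \in C & (y \in A) != (y \in B)]].

(* [s.+1] for the largest [s < X] outside [C] at which [A] and [B] differ,
   and [0] if there is none. *)
Fixpoint split_point C A B (X : nat) : nat :=
  if X is X'.+1 then
    if (bit A X' != bit B X') && (bit C X' == 0) then X'.+1 else split_point C A B X'
  else 0.

Definition greedy_step st i j :=
  let: (C, cnt) := st in
  let s := split_point C (edge i) (edge j) n in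
  if [&& ~~ differ_in C (edge i) (edge j) n, s != 0 & k - cnt != 0]
  then (set_bit C s.-1, cnt.+1) else (C, cnt).

Fixpoint greedy_inner st j i r :=
  if r is r'.+1 then greedy_inner (greedy_step st i j) j i.+1 r' else st.

Fixpoint greedy_outer st j r :=
  if r is r'.+1 then greedy_outer (greedy_inner st j 0 #|E|) j.+1 r' else st.

Definition pad_step st x :=
  let: (C, cnt) := st in
  if (k - cnt != 0) && (bit C x == 0) then (set_bit C x, cnt.+1) else (C, cnt).

Fixpoint pad st x r := if r is r'.+1 then pad (pad_step st x) x.+1 r' else st.

Definition greedy_set := (pad (greedy_outer (set0, 0) 0 #|E|) 0 n).1.

Lemma bit_ord A (y : 'I_n) : bit A y = (y \in A).
Proof.
rewrite /bit; congr nat_of_bool; apply/existsP/idP => [[z /andP [/eqP zy]] | Ay].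
  by rewrite (val_inj zy).
by exists y; rewrite eqxx.
Qed.

Lemma bit_ge A x : n <= x -> bit A x = 0.
Proof.
move=> le_n_x; rewrite /bit; case: existsP => // [[z /andP [/eqP zx _]]].
by move: (ltn_ord z); rewrite zx ltnNge le_n_x.
Qed.

Lemma bit_le1 A x : bit A x <= 1.
Proof. by rewrite /bit; case: existsP. Qed.

Lemma set_bit_ord C x (ltxn : x < n) : set_bit C x = Ordinal ltxn |: C.
Proof. by apply/setP => y; rewrite !inE orbC. Qed.

Lemma bit_set_bit C x y : x < n -> bit (set_bit C x) y = if y == x then 1 else bit C y.
Proof.
move=> ltxn; have [ltyn | le_n_y] := ltnP y n.
  rewrite -[y]/(val (Ordinal ltyn)) !bit_ord !inE /=; by case: eqP; rewrite ?orbT ?orbF.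
rewrite !bit_ge //; case: eqP => // yx; by move: ltxn; rewrite -yx ltnNge le_n_y.
Qed.

Lemma card_set_bit C x : x < n -> bit C x = 0 -> #|set_bit C x| = #|C|.+1.
Proof.
move=> ltxn; rewrite (set_bit_ord _ ltxn) cardsU1 -[x]/(val (Ordinal ltxn)) bit_ord.
by case: (_ \in C).
Qed.

Lemma set_bit_sub C x : C \subset set_bit C x.
Proof. by apply/subsetP => y Cy; rewrite inE Cy. Qed.

Lemma split_point0 C A B X : split_point C A B X = 0 ->
  forall y : 'I_n, val y < X -> y \notin C -> (y \in A) = (y \in B).
Proof.
elim: X => [|X IH] //=; case: ifP => // /negbT; rewrite negb_and negbK.
move=> noX /IH {}IH y; rewrite ltnS leq_eqVlt => /orP [/eqP yX | /IH //] Cy.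
by move: noX; rewrite -yX !bit_ord (negbTE Cy) /=; case: (y \in A); case: (y \in B).
Qed.

Lemma split_pointS C A B X s : split_point C A B X = s.+1 ->
  [/\ s < n, bit C s = 0 & bit A s != bit B s].
Proof.
elim: X => [|X IH] //=; case: ifP => [/andP [neqAB /eqP Cs] [<-] | _]; last exact: IH.
by split=> //; case: (ltnP X n) => // le_n_X; move: neqAB; rewrite !bit_ge.
Qed.

Lemma split_point_separates C A B s : split_point C A B n = s.+1 ->
  A :&: set_bit C s != B :&: set_bit C s.
Proof.
case/split_pointS => ltsn _; rewrite (set_bit_ord _ ltsn) -[s]/(val (Ordinal ltsn)) !bit_ord.
by apply: contra => /eqP /setP /(_ (Ordinal ltsn)); rewrite !inE eqxx !andbT => ->.
Qed.

Lemma differ_inP C A B : reflect (A :&: C != B :&: C) (differ_in C A B n).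
Proof.
apply: (iffP idP) => [/existsP [y /and3P [_ Cy]] | ].
  by apply: contra => /eqP /setP /(_ y); rewrite !inE Cy !andbT => ->.
apply: contraNT => nodiff; apply/eqP/setP => y; rewrite !inE.
case Cy: (y \in C); rewrite ?andbF ?andbT //; apply/eqP; apply: contraNT nodiff => neq.
by apply/existsP; exists y; rewrite ltn_ord Cy.
Qed.

Lemma differ_in0 C A B : differ_in C A B 0 = false.
Proof. by apply/existsP => [[y /and3P []]]. Qed.

Lemma differ_inS C A B X : X < n ->
  differ_in C A B X.+1 = differ_in C A B X || (bit C X == 1) && (bit A X != bit B X).
Proof.
move=> ltXn; rewrite /differ_in -[X]/(val (Ordinal ltXn)) !bit_ord; set x := Ordinal ltXn.
apply/existsP/orP => [[y /and3P [] /[!ltnS] + Cy neq] | [/existsP [y /and3P [lty Cy neq]] | ]].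
- rewrite leq_eqVlt => /orP [/eqP/val_inj yx | lty].
    by right; move: Cy neq; rewrite -yx => -> /=; case: (y \in A); case: (y \in B).
  by left; apply/existsP; exists y; apply/and3P.
- by exists y; rewrite ltnS (ltnW lty) Cy neq.
- move=> /andP [Cx neq]; exists x; apply/and3P; split=> //; first by case: (x \in C) Cx.
  by case: (x \in A) neq; case: (x \in B).
Qed.

Lemma edge_in i : i < #|E| -> edge i \in E.
Proof. by move=> ltiE; rewrite -mem_enum mem_nth // -cardE. Qed.

Lemma edge_inj i j : i < #|E| -> j < #|E| -> edge i = edge j -> i = j.
Proof.
move=> ltiE ltjE eqij; apply/eqP.
by rewrite -(nth_uniq set0 _ _ (enum_uniq (mem E))) -?cardE // -/(edge i) -/(edge j) eqij.
Qed.

Lemma edge_index A : A \in E -> edge (index A (enum E)) = A /\ index A (enum E) < #|E|.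
Proof. by move=> EA; rewrite /edge nth_index ?cardE ?index_mem mem_enum. Qed.

Lemma edge_eq_of_no_split C i j : i < #|E| -> j < #|E| ->
  ~~ differ_in C (edge i) (edge j) n -> split_point C (edge i) (edge j) n = 0 -> i = j.
Proof.
move=> ltiE ltjE /differ_inP/negP/negbNE/eqP eqC /split_point0 eq_out.
apply: edge_inj => //; apply/setP => y; case Cy: (y \in C); last by rewrite eq_out ?ltn_ord ?Cy.
by move/setP: eqC => /(_ y); rewrite !inE Cy !andbT.
Qed.

(* While the greedy phase runs, every added vertex separates two edges not
   yet separated, so [cnt] vertices yield at least [cnt + 1] classes. *)
Definition greedy_inv st :=
  [/\ #|st.1| = st.2, st.2 <= k & (#|E| = 0 \/ st.2 < nb_classes E st.1)].

Definition separated st i j := edge i :&: st.1 != edge j :&: st.1 \/ i = j \/ st.2 = k.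

Lemma greedy_step_cases st i j :
  greedy_step st i j = st \/
  exists s, [/\ greedy_step st i j = (set_bit st.1 s, st.2.+1),
                split_point st.1 (edge i) (edge j) n = s.+1,
                edge i :&: st.1 = edge j :&: st.1 & st.2 < k].
Proof.
case: st => C cnt; rewrite /greedy_step.
case: ifP => [/and3P [/differ_inP/negP/negbNE/eqP eqC ns lt_cnt_k] | _]; last by left.
right; case ss: (split_point _ _ _ _) ns => [|s] // _.
by exists s; split; rewrite // -subn_gt0 lt0n.
Qed.

Lemma greedy_inv0 : greedy_inv (set0, 0).
Proof.
split; rewrite /= ?cards0 //.
by have [-> | /nb_classes_set0 ->] := eqVneq E set0; [left; rewrite cards0 | right].
Qed.

Lemma greedy_inv_step st i j : i < #|E| -> j < #|E| ->
  greedy_inv st -> greedy_inv (greedy_step st i j).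
Proof.
move=> ltiE ltjE [cardC le_cnt_k nbC].
have [-> // | [s [-> ss eqC lt_cnt_k]]] := greedy_step_cases st i j.
have [ltsn Cs _] := split_pointS ss.
split=> //=; first by rewrite card_set_bit // cardC.
case: nbC => [|nbC]; [by left | right].
apply: leq_ltn_trans nbC _; rewrite (set_bit_ord _ ltsn).
apply: nb_classes_separate (edge_in ltiE) (edge_in ltjE) eqC _.
by rewrite -set_bit_ord split_point_separates.
Qed.

Lemma trace_neq_subset A B C C' : C \subset C' -> A :&: C != B :&: C -> A :&: C' != B :&: C'.
Proof. by move=> sCC'; apply: contra => /eqP eqC'; rewrite -(setIidPr sCC') !setIA eqC'. Qed.

Lemma separated_step st i j i' j' :
  separated st i j -> separated (greedy_step st i' j') i j.
Proof.
move=> sep; have [-> // | [s [-> _ _ lt_cnt_k]]] := greedy_step_cases st i' j'.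
case: sep => [neq | [eqij | cnt_k]]; last by move: lt_cnt_k; rewrite cnt_k ltnn.
  by left; apply: trace_neq_subset (set_bit_sub _ _) neq.
by right; left.
Qed.

Lemma separated_step_self st i j : i < #|E| -> j < #|E| -> greedy_inv st ->
  separated (greedy_step st i j) i j.
Proof.
case: st => C cnt ltiE ltjE [_ /= le_cnt_k _]; rewrite /separated /greedy_step.
case: ifP => [/and3P [_ ns _] | no_add] /=.
  by left; case ss: (split_point _ _ _ _) ns => [|s] // _; apply: split_point_separates.
have [/differ_inP neq | nodiff] := boolP (differ_in C (edge i) (edge j) n); first by left.
move: no_add; rewrite nodiff /=; case ns: (split_point _ _ _ _ == 0) => /= full.
  by right; left; apply: edge_eq_of_no_split nodiff (eqP ns).
by right; right; apply/eqP; rewrite eqn_leq le_cnt_k -subn_eq0 (negbFE full).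
Qed.

Lemma greedy_inner_spec r st i j : i + r = #|E| -> j < #|E| -> greedy_inv st ->
  (forall i' j', i' < #|E| -> (j' < j \/ j' = j /\ i' < i) -> separated st i' j') ->
  greedy_inv (greedy_inner st j i r) /\
  (forall i' j', i' < #|E| -> j' <= j -> separated (greedy_inner st j i r) i' j').
Proof.
elim: r st i => [|r IH] st i /= irE ltjE inv sep.
  rewrite addn0 in irE; subst i; split=> // i' j' lti'E.
  by rewrite leq_eqVlt => /orP [/eqP -> | ltj'j]; apply: sep => //; [right | left].
have ltiE : i < #|E| by rewrite -irE -addSnnS leq_addr.
apply: IH; [by rewrite addSnnS | done | exact: greedy_inv_step | move=> i' j' lti'E sep'].
have [-> | ne] := eqVneq i' i.
  case: sep' => [ltj'j | [-> _]]; last exact: separated_step_self.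
  by apply/separated_step/sep => //; left.
apply/separated_step/sep => //; case: sep' => [|[eqj' lti']]; first by left.
by right; split; rewrite // ltnS leq_eqVlt (negbTE ne) in lti'.
Qed.

Lemma greedy_outer_spec r st j : j + r = #|E| -> greedy_inv st ->
  (forall i' j', i' < #|E| -> j' < j -> separated st i' j') ->
  greedy_inv (greedy_outer st j r) /\
  (forall i' j', i' < #|E| -> j' < #|E| -> separated (greedy_outer st j r) i' j').
Proof.
elim: r st j => [|r IH] st j /= jrE inv sep.
  by rewrite addn0 in jrE; subst j; split=> // i' j'; apply: sep.
have ltjE : j < #|E| by rewrite -jrE -addSnnS leq_addr.
have sep0 i' j' : i' < #|E| -> j' < j \/ j' = j /\ i' < 0 -> separated st i' j'.
  by move=> lti'E [ltj'j | [_ //]]; apply: sep.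
have [inv' sep'] := greedy_inner_spec (add0n _) ltjE inv sep0.
by apply: IH; rewrite ?addSnnS // => i' j' lti'E; rewrite ltnS; apply: sep'.
Qed.

Lemma greedy_phase_spec :
  greedy_inv (greedy_outer (set0, 0) 0 #|E|) /\
  forall i j, i < #|E| -> j < #|E| -> separated (greedy_outer (set0, 0) 0 #|E|) i j.
Proof. by apply: greedy_outer_spec => //; apply: greedy_inv0. Qed.

Lemma nb_classes_separated C :
  (forall i j, i < #|E| -> j < #|E| -> edge i :&: C != edge j :&: C \/ i = j) ->
  nb_classes E C = #|E|.
Proof.
move=> sep; apply: card_in_imset => A B /edge_index [eA ltAE] /edge_index [eB ltBE] /= eqAB.
have [|eqi] := sep _ _ ltAE ltBE; first by rewrite eA eB eqAB eqxx.
by rewrite -eA eqi eB.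
Qed.

Definition pad_inv x st :=
  [/\ #|st.1| = st.2, st.2 <= k & st.2 = k \/ forall y : 'I_n, val y < x -> y \in st.1].

Lemma pad_step_inv st x : x < n -> pad_inv x st ->
  pad_inv x.+1 (pad_step st x) /\ st.1 \subset (pad_step st x).1.
Proof.
case: st => C cnt ltxn [/= cardC le_cnt_k full]; rewrite /pad_step.
have [cnt_k | ne_cnt_k] := eqVneq cnt k.
  by rewrite cnt_k subnn /=; split=> //; split; rewrite ?cardC ?cnt_k //; left.
have {}full : forall y : 'I_n, val y < x -> y \in C.
  by case: full => // cnt_k; rewrite cnt_k eqxx in ne_cnt_k.
have ltcntk : cnt < k by rewrite ltn_neqAle ne_cnt_k.
rewrite -lt0n subn_gt0 ltcntk /=; have [Cx | Cx] := eqVneq (bit C x) 0.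
  split; last exact: set_bit_sub.
  split; rewrite /= ?card_set_bit ?cardC //; right => y.
  by rewrite ltnS leq_eqVlt inE => /orP [-> | /full ->]; rewrite ?orbT.
split=> //; split=> //; right => y; rewrite ltnS leq_eqVlt => /orP [/eqP yx | /full //].
by move: Cx; rewrite -yx bit_ord; case: (y \in C).
Qed.

Lemma pad_full C x r : pad (C, k) x r = (C, k).
Proof. by elim: r x => [|r IH] x //=; rewrite subnn. Qed.

Lemma pad_spec r st x : x + r = n -> pad_inv x st ->
  pad_inv n (pad st x r) /\ st.1 \subset (pad st x r).1.
Proof.
elim: r st x => [|r IH] st x /= xrn inv; first by rewrite addn0 in xrn; subst x.
have ltxn : x < n by rewrite -xrn -addSnnS leq_addr.
have [inv' sub'] := pad_step_inv ltxn inv.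
have [inv'' sub''] := IH _ _ (etrans (addSnnS x r) xrn) inv'.
by split=> //; apply: subset_trans sub' sub''.
Qed.

Lemma greedy_spec : k <= n ->
  #|greedy_set| = k /\ (k < nb_classes E greedy_set \/ #|E| <= nb_classes E greedy_set).
Proof.
move=> le_k_n; rewrite /greedy_set.
have [[cardC le_cnt_k nbC] sep] := greedy_phase_spec.
set st := greedy_outer _ _ _ in cardC le_cnt_k nbC sep *.
have nb_st : k < nb_classes E st.1 \/ #|E| <= nb_classes E st.1.
  have [cnt_k | ne_cnt_k] := eqVneq st.2 k.
    by case: nbC => [-> | ]; [right | left; rewrite -cnt_k].
  right; rewrite nb_classes_separated // => i j ltiE ltjE.
  by case: (sep i j ltiE ltjE) => [| [|/eqP]]; [left | right | rewrite (negbTE ne_cnt_k)].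
have inv0 : pad_inv 0 st by split=> //; right.
have [[cardC' le_cnt_k' full] subC] := pad_spec (add0n n) inv0.
split.
  rewrite cardC'; case: full => // full; apply/eqP; rewrite eqn_leq le_cnt_k' -cardC' /=.
  apply: leq_trans le_k_n _; rewrite -[n in n <= _]card_ord subset_leq_card //.
  by apply/subsetP => y _; apply: full (ltn_ord y).
by case: nb_st => nb_st; [left | right]; apply: leq_trans nb_st (subset_leq_nb_classes _ subC).
Qed.

End Greedy.

Section Encoding.
Variables (n : nat) (E : {set {set 'I_n}}) (k : nat).

Lemma encode_bit i x : i < #|E| -> x < n -> encode E k (3 + (i * n + x)) = bit (edge E i) x.
Proof.
move=> ltiE ltxn; rewrite /encode /= addKn.
have -> : i * n + x < #|E| * n.
  apply: leq_trans (_ : i.+1 * n <= _); first by rewrite mulSn addnC ltn_add2r.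
  by rewrite leq_mul2r ltiE orbT.
by rewrite modnMDl (modn_small ltxn) divnMDl ?(divn_small ltxn) ?addn0 // (leq_ltn_trans _ ltxn).
Qed.

Lemma encode_ge a : 3 + #|E| * n <= a -> encode E k a = 0.
Proof.
rewrite /encode; case: a => [|[|[|a]]] //= le_a.
by rewrite -addn3 addnK ltnNge -(leq_add2l 3) le_a.
Qed.

Lemma encode_le1 a : 3 <= a -> encode E k a <= 1.
Proof. by case: a => [|[|[|a]]] //= _; rewrite /encode /=; case: ifP => //; case: existsP. Qed.

End Encoding.

Fixpoint steps (P : program) (s pc : nat) (m : memory) : option (nat * memory) :=
  if s is s'.+1 then
    if step P pc m is Some (pc', m') then steps P s' pc' m' else None
  else Some (pc, m).

Lemma steps_add P s1 s2 pc m :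
  steps P (s1 + s2) pc m =
  if steps P s1 pc m is Some (pc', m') then steps P s2 pc' m' else None.
Proof. by elim: s1 pc m => [|s1 IH] pc m //=; case: (step P pc m) => [[]|]. Qed.

Lemma exec_steps P s t pc m pc' m' :
  steps P s pc m = Some (pc', m') -> exec P (s + t) pc m = exec P t pc' m'.
Proof.
elim: s pc m => [|s IH] pc m /=; first by case=> -> ->.
by case: (step P pc m) => [[pc1 m1]|] //; apply: IH.
Qed.

Lemma exec_mono P t u pc m m' :
  exec P t pc m = Some m' -> t <= u -> exec P u pc m = Some m'.
Proof.
elim: t u pc m => [|t IH] [|u] pc m //=; case: (step P pc m) => [[pc1 m1]|] //.
exact: IH.
Qed.

Definition runs P pc m (Q : nat -> memory -> Prop) b :=
  exists s pc' m', [/\ s <= b, steps P s pc m = Some (pc', m') & Q pc' m'].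

Lemma runs_now P pc m (Q : nat -> memory -> Prop) b : Q pc m -> runs P pc m Q b.
Proof. by exists 0, pc, m. Qed.

Lemma runs_step P pc m pc' m' Q b :
  step P pc m = Some (pc', m') -> runs P pc' m' Q b -> runs P pc m Q b.+1.
Proof.
by move=> stepE [s [pc2 [m2 [le_s_b stepsE Q2]]]]; exists s.+1, pc2, m2; rewrite /= stepE.
Qed.

Lemma runs_le P pc m (Q : nat -> memory -> Prop) b b' :
  runs P pc m Q b -> b <= b' -> runs P pc m Q b'.
Proof.
move=> [s [pc2 [m2 [le_s_b stepsE Q2]]]] le_b_b'.
by exists s, pc2, m2; split; first exact: leq_trans le_b_b'.
Qed.

Lemma runs_post P pc m (Q Q' : nat -> memory -> Prop) b :
  runs P pc m Q b -> (forall pc' m', Q pc' m' -> Q' pc' m') -> runs P pc m Q' b.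
Proof.
by move=> [s [pc2 [m2 [le_s_b stepsE Q2]]]] QQ'; exists s, pc2, m2; split; last exact: QQ'.
Qed.

Lemma runs_seq P pc m (Q1 Q2 : nat -> memory -> Prop) b1 b2 :
  runs P pc m Q1 b1 -> (forall pc' m', Q1 pc' m' -> runs P pc' m' Q2 b2) ->
  runs P pc m Q2 (b1 + b2).
Proof.
move=> [s1 [pc1 [m1 [le_s1 steps1 Q1m]]]] /(_ _ _ Q1m) [s2 [pc2 [m2 [le_s2 steps2 Q2m]]]].
by exists (s1 + s2), pc2, m2; rewrite leq_add // steps_add steps1.
Qed.

Lemma runs_halt P pc m b (R : memory -> Prop) :
  runs P pc m (fun pc' m' => nth IHalt P pc' = IHalt /\ R m') b ->
  exists mf, R mf /\ forall t, b <= t -> exec P t pc m = Some mf.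
Proof.
move=> [s [pc' [mf [le_s_b stepsE [halt Rmf]]]]]; exists mf; split=> // t le_b_t.
apply: (@exec_mono _ (s + 0)); last by rewrite addn0 (leq_trans le_s_b).
by rewrite (exec_steps _ stepsE) /= /step halt.
Qed.

Definition nregs := 18.
Definition with_regs (rs : seq nat) (H : memory) : memory :=
  fun a => if a < nregs then nth 0 rs a else H a.

Lemma with_regs_hi rs H a : nregs <= a -> with_regs rs H a = H a.
Proof. by rewrite /with_regs ltnNge => ->. Qed.

Lemma with_regs_lo rs H a : a < nregs -> with_regs rs H a = nth 0 rs a.
Proof. by rewrite /with_regs => ->. Qed.

Lemma upd_reg rs H r v : r < nregs -> upd (with_regs rs H) r v = with_regs (set_nth 0 rs r v) H.
Proof.
move=> ltr; apply: functional_extensionality => a.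
by rewrite /upd /with_regs nth_set_nth /=; case: (eqVneq a r) => [->|//]; rewrite ltr.
Qed.

Lemma upd_heap rs H p v : nregs <= p -> upd (with_regs rs H) p v = with_regs rs (upd H p v).
Proof.
move=> lep; apply: functional_extensionality => a.
by rewrite /upd /with_regs; case: (eqVneq a p) => [->|//]; rewrite ltnNge lep.
Qed.

Definition code_at (P : program) (o : nat) (c : program) :=
  forall i, i < size c -> nth IHalt P (o + i) = nth IHalt c i.

Lemma code_at_catl P o c1 c2 : code_at P o (c1 ++ c2) -> code_at P o c1.
Proof. by move=> Pc i lti; rewrite Pc ?size_cat ?nth_cat ?lti // ltn_addr. Qed.

Lemma code_at_catr P o c1 c2 : code_at P o (c1 ++ c2) -> code_at P (o + size c1) c2.
Proof.
move=> Pc i lti; rewrite -addnA Pc ?size_cat ?ltn_add2l // nth_cat.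
by rewrite ltnNge leq_addr /= addKn.
Qed.

Lemma code_at_cons P o i c : code_at P o (i :: c) -> code_at P o.+1 c.
Proof. by move=> Pc j ltj; have := Pc j.+1; rewrite addnS addSn; apply. Qed.

Lemma runs_const P o code c r v rs H Q b :
  code_at P o code -> c < size code -> nth IHalt code c = IConst r v -> r < nregs ->
  runs P (o + c.+1) (with_regs (set_nth 0 rs r v) H) Q b ->
  runs P (o + c) (with_regs rs H) Q b.+1.
Proof.
move=> Pc ltc instr ltr; apply: runs_step.
by rewrite /step Pc // instr upd_reg // addnS.
Qed.

Lemma runs_add P o code c r a1 a2 rs H Q b :
  code_at P o code -> c < size code -> nth IHalt code c = IAdd r a1 a2 -> r < nregs ->
  a1 < nregs -> a2 < nregs ->
  runs P (o + c.+1) (with_regs (set_nth 0 rs r (nth 0 rs a1 + nth 0 rs a2)) H) Q b ->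
  runs P (o + c) (with_regs rs H) Q b.+1.
Proof.
move=> Pc ltc instr ltr lta1 lta2; apply: runs_step.
by rewrite /step Pc // instr upd_reg // !with_regs_lo // addnS.
Qed.

Lemma runs_sub P o code c r a1 a2 rs H Q b :
  code_at P o code -> c < size code -> nth IHalt code c = ISub r a1 a2 -> r < nregs ->
  a1 < nregs -> a2 < nregs ->
  runs P (o + c.+1) (with_regs (set_nth 0 rs r (nth 0 rs a1 - nth 0 rs a2)) H) Q b ->
  runs P (o + c) (with_regs rs H) Q b.+1.
Proof.
move=> Pc ltc instr ltr lta1 lta2; apply: runs_step.
by rewrite /step Pc // instr upd_reg // !with_regs_lo // addnS.
Qed.

Lemma runs_load P o code c r a rs H Q b :
  code_at P o code -> c < size code -> nth IHalt code c = ILoad r a -> r < nregs ->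
  a < nregs -> nregs <= nth 0 rs a ->
  runs P (o + c.+1) (with_regs (set_nth 0 rs r (H (nth 0 rs a))) H) Q b ->
  runs P (o + c) (with_regs rs H) Q b.+1.
Proof.
move=> Pc ltc instr ltr lta lea; apply: runs_step.
by rewrite /step Pc // instr upd_reg // (with_regs_lo _ _ lta) (with_regs_hi _ _ lea) addnS.
Qed.

Lemma runs_load_any P o code c r a rs H Q b :
  code_at P o code -> c < size code -> nth IHalt code c = ILoad r a -> r < nregs ->
  a < nregs ->
  runs P (o + c.+1) (with_regs (set_nth 0 rs r (with_regs rs H (nth 0 rs a))) H) Q b ->
  runs P (o + c) (with_regs rs H) Q b.+1.
Proof.
move=> Pc ltc instr ltr lta; apply: runs_step.
by rewrite /step Pc // instr upd_reg // (with_regs_lo _ _ lta) addnS.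
Qed.

Lemma runs_store P o code c a1 a2 rs H Q b :
  code_at P o code -> c < size code -> nth IHalt code c = IStore a1 a2 ->
  a1 < nregs -> a2 < nregs -> nregs <= nth 0 rs a1 ->
  runs P (o + c.+1) (with_regs rs (upd H (nth 0 rs a1) (nth 0 rs a2))) Q b ->
  runs P (o + c) (with_regs rs H) Q b.+1.
Proof.
move=> Pc ltc instr lta1 lta2 lea1; apply: runs_step.
by rewrite /step Pc // instr !with_regs_lo // upd_heap // addnS.
Qed.

Lemma runs_jump P o code c a t rs H Q b :
  code_at P o code -> c < size code -> nth IHalt code c = IJz a t -> a < nregs ->
  nth 0 rs a = 0 ->
  runs P t (with_regs rs H) Q b ->
  runs P (o + c) (with_regs rs H) Q b.+1.
Proof.
move=> Pc ltc instr lta rsa; apply: runs_step.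
by rewrite /step Pc // instr with_regs_lo // rsa.
Qed.

Lemma runs_next P o code c a t rs H Q b :
  code_at P o code -> c < size code -> nth IHalt code c = IJz a t -> a < nregs ->
  nth 0 rs a <> 0 ->
  runs P (o + c.+1) (with_regs rs H) Q b ->
  runs P (o + c) (with_regs rs H) Q b.+1.
Proof.
move=> Pc ltc instr lta rsa; apply: runs_step.
by rewrite /step Pc // instr with_regs_lo // (negbTE (introN eqP rsa)) addnS.
Qed.

(* [run Hc] symbolically executes the instruction at the current pc of the
   fragment [Hc : code_at P o code]; it leaves as side goals that a load or
   store address lies above the registers.  The jump tactics leave the test on
   the register value. *)
Ltac code_of Hc := match type of Hc with code_at _ _ ?c => c end.
Ltac norm := cbn [set_nth nth].
Ltac run Hc :=
  lazymatch goal with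
  | |- runs _ (_ + ?c) (with_regs _ _) _ _ =>
    let code := code_of Hc in
    let i := eval cbn in (nth IHalt code c) in
    lazymatch i with
    | IConst _ _ => eapply (@runs_const _ _ _ c _ _ _ _ _ _ Hc);
                    [reflexivity|reflexivity|reflexivity|norm]
    | IAdd _ _ _ => eapply (@runs_add _ _ _ c _ _ _ _ _ _ _ Hc);
                    [reflexivity|reflexivity|reflexivity|reflexivity|reflexivity|norm]
    | ISub _ _ _ => eapply (@runs_sub _ _ _ c _ _ _ _ _ _ _ Hc);
                    [reflexivity|reflexivity|reflexivity|reflexivity|reflexivity|norm]
    | ILoad _ _ => eapply (@runs_load _ _ _ c _ _ _ _ _ _ Hc);
                    [reflexivity|reflexivity|reflexivity|reflexivity|norm|norm]
    | IStore _ _ => eapply (@runs_store _ _ _ c _ _ _ _ _ _ Hc);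
                    [reflexivity|reflexivity|reflexivity|reflexivity|norm|norm]
    end
  end.
Ltac run_jump Hc := eapply (runs_jump Hc); [reflexivity|reflexivity|reflexivity|norm|norm].
Ltac run_next Hc := eapply (runs_next Hc); [reflexivity|reflexivity|reflexivity|norm|norm].

(* The greedy algorithm on the relocated input at [B].  Registers: 0 n,
   1 |E|, 2 k, 3 the constant 1, 4 the constant 0 (for unconditional jumps),
   5 the address [CB] of the bit vector of C, 6 |C|, 7 j, 8 the address of row
   j of the incidence matrix, 9 i, 10 the address of row i, 11 x, 12-14
   scratch, 15 whether rows i and j already differ on C, 16 [split_point],
   17 the address [R0] of the matrix.  On entry registers 0 and 1 hold [B] and
   the input length; on exit cells [0, n) hold the bit vector of C. *)
Definition main_code (o : nat) : program := [::
(*0*)  IConst 3 1; IConst 4 0; IAdd 5 0 1; IConst 17 3; IAdd 17 17 0;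
(*5*)  IAdd 12 0 3; ILoad 1 12; IAdd 12 12 3; ILoad 2 12; ILoad 0 0;
(*10*) IConst 6 0; IConst 7 0; IAdd 8 17 4;
(*13 JLOOP*) ISub 12 1 7; IJz 12 (o + 55);
(*15*) IConst 9 0; IAdd 10 17 4;
(*17 ILOOP*) ISub 12 1 9; IJz 12 (o + 52);
(*19*) IConst 15 0; IConst 16 0; IConst 11 0;
(*22 XLOOP*) ISub 12 0 11; IJz 12 (o + 40);
(*24*) IAdd 12 10 11; ILoad 12 12; IAdd 13 8 11; ILoad 13 13;
(*28*) ISub 14 12 13; ISub 13 13 12; IAdd 14 14 13; IJz 14 (o + 38);
(*32*) IAdd 12 5 11; ILoad 12 12; IJz 12 (o + 37);
(*35*) IConst 15 1; IJz 4 (o + 38);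
(*37 XSEP*) IAdd 16 11 3;
(*38 XNEXT*) IAdd 11 11 3; IJz 4 (o + 22);
(*40 XDONE*) IJz 15 (o + 42); IJz 4 (o + 49);
(*42*) IJz 16 (o + 49); ISub 12 2 6; IJz 12 (o + 49);
(*45*) IAdd 12 5 16; ISub 12 12 3; IStore 12 3; IAdd 6 6 3;
(*49 INEXT*) IAdd 9 9 3; IAdd 10 10 0; IJz 4 (o + 17);
(*52 IDONE*) IAdd 7 7 3; IAdd 8 8 0; IJz 4 (o + 13);
(*55 JDONE*) IConst 11 0;
(*56 PLOOP*) ISub 12 0 11; IJz 12 (o + 68); ISub 12 2 6; IJz 12 (o + 68);
(*60*) IAdd 12 5 11; ILoad 13 12; IJz 13 (o + 64); IJz 4 (o + 66);
(*64 PADD*) IStore 12 3; IAdd 6 6 3;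
(*66 PNEXT*) IAdd 11 11 3; IJz 4 (o + 56);
(*68 PDONE*) IConst 11 18;
(*69 OLOOP*) ISub 12 0 11; IJz 12 (o + 76);
(*71*) IAdd 12 5 11; ILoad 12 12; IStore 11 12; IAdd 11 11 3; IJz 4 (o + 69);
(*76 ODONE*) IAdd 0 5 4;
(*77*) IConst 17 17; IAdd 17 17 0; ILoad 17 17;
 IConst 16 16; IAdd 16 16 0; ILoad 16 16;
 IConst 15 15; IAdd 15 15 0; ILoad 15 15;
 IConst 14 14; IAdd 14 14 0; ILoad 14 14;
 IConst 13 13; IAdd 13 13 0; ILoad 13 13;
 IConst 12 12; IAdd 12 12 0; ILoad 12 12;
 IConst 11 11; IAdd 11 11 0; ILoad 11 11;
 IConst 10 10; IAdd 10 10 0; ILoad 10 10;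
 IConst 9 9; IAdd 9 9 0; ILoad 9 9;
 IConst 8 8; IAdd 8 8 0; ILoad 8 8;
 IConst 7 7; IAdd 7 7 0; ILoad 7 7;
 IConst 6 6; IAdd 6 6 0; ILoad 6 6;
 IConst 5 5; IAdd 5 5 0; ILoad 5 5;
 IConst 4 4; IAdd 4 4 0; ILoad 4 4;
 IConst 3 3; IAdd 3 3 0; ILoad 3 3;
 IConst 2 2; IAdd 2 2 0; ILoad 2 2;
 IConst 1 1; IAdd 1 1 0; ILoad 1 1;
(*128*) ILoad 0 0; IHalt ].

Definition main_time n m :=
  13 + ((2 + m * (9 + m * (18 + 17 * n))) + (1 + ((4 + 11 * n) + (1 + (2 + 7 * n) + 53)))).

Section Main.
Variables (P : program) (o : nat) (n : nat) (E : {set {set 'I_n}}) (k B : nat).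
Hypothesis Hc : code_at P o (main_code o).
Hypothesis le_n_B : 18 + n <= B.
Let m := #|E|.
Let L := 3 + m * n.
Let CB := B + L.
Let R0 := B + 3.

Definition heap_ok (H : memory) (C : {set 'I_n}) :=
  (forall a, a < L -> H (B + a) = encode E k a) /\ (forall x, H (CB + x) = bit C x).

Lemma heap_ok_bit H C i x :
  heap_ok H C -> i < m -> x < n -> H (R0 + i * n + x) = bit (edge E i) x.
Proof.
move=> [input _] ltim ltxn; rewrite -(encode_bit k ltim ltxn) -input /R0 ?addnA //.
have : i.+1 * n <= m * n by rewrite leq_mul2r ltim orbT.
by rewrite /L mulSn; lia.
Qed.

Lemma heap_ok_set_bit H C s :
  heap_ok H C -> s < n -> heap_ok (upd H (CB + s) 1) (set_bit C s).
Proof.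
move=> [input vecC] ltsn; split=> [a ltaL | x]; rewrite /upd.
  by case: eqP => [| _]; [rewrite /CB; lia | apply: input].
rewrite bit_set_bit //; case: (eqVneq x s) => [-> | neq]; first by rewrite eqxx.
by case: eqP => [/addnI eqxs | _]; [rewrite eqxs eqxx in neq | apply: vecC].
Qed.

Lemma heap_ok_store H C x v : heap_ok H C -> x < B -> heap_ok (upd H x v) C.
Proof.
move=> [input vecC] ltxB; split=> [a ltaL | y]; rewrite /upd.
  by case: eqP => [eqx | _]; [lia | apply: input].
by case: eqP => [eqx | _]; [rewrite /CB in eqx; lia | apply: vecC].
Qed.

Definition scan_post C cnt I J (H : memory) : nat -> memory -> Prop :=
  fun pc mm => pc = o + 40 /\ exists t12 t13 t14,
   mm = with_regs [:: n; m; k; 1; 0; CB; cnt; J; R0 + J * n; I; R0 + I * n; n; t12; t13; t14;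
                  nat_of_bool (differ_in C (edge E I) (edge E J) n);
                  split_point C (edge E I) (edge E J) n; R0] H.

Lemma scan_loop_ok r C cnt I J X H t12 t13 t14 df sp :
  X + r = n -> I < m -> J < m -> heap_ok H C ->
  df = nat_of_bool (differ_in C (edge E I) (edge E J) X) ->
  sp = split_point C (edge E I) (edge E J) X ->
  runs P (o + 22)
   (with_regs [:: n; m; k; 1; 0; CB; cnt; J; R0 + J * n; I; R0 + I * n; X; t12; t13; t14;
                  df; sp; R0] H)
   (scan_post C cnt I J H) (2 + 17 * r).
Proof.
elim: r X t12 t13 t14 df sp => [|r IH] X t12 t13 t14 df sp Xrn ltIm ltJm ok -> ->.
  rewrite addn0 in Xrn; subst X.
  run Hc; run_jump Hc; first by rewrite subnn.
  by apply: runs_now; split=> //; exists (n - n), t13, t14.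
have ltXn : X < n by lia.
rewrite (_ : 2 + _ = 19 + 17 * r); last by lia.
run Hc; run_next Hc; first lia.
run Hc; run Hc; first by rewrite /R0 /nregs; lia.
rewrite (heap_ok_bit ok ltIm ltXn).
run Hc; run Hc; first by rewrite /R0 /nregs; lia.
rewrite (heap_ok_bit ok ltJm ltXn).
run Hc; run Hc; run Hc.
have := bit_le1 (edge E I) X; have := bit_le1 (edge E J) X.
have [eqb | neqb] := eqVneq (bit (edge E I) X) (bit (edge E J) X) => [_ _ | le1J le1I].
  run_jump Hc; first by rewrite eqb subnn.
  run Hc; run_jump Hc => //; rewrite addn1.
  apply: runs_le; first apply: IH; rewrite ?(addSnnS X) //; try lia.
    by rewrite differ_inS // eqb eqxx andbF orbF.
  by rewrite /= eqb eqxx.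
run_next Hc.
  by move: neqb le1I le1J; case: (bit (edge E I) X) => [|[|]]; case: (bit (edge E J) X) => [|[|]].
run Hc; run Hc; first by rewrite /CB /nregs; lia.
rewrite ok.2; have [CX | CX] := eqVneq (bit C X) 0.
  run_jump Hc => //; run Hc; run Hc; run_jump Hc => //; rewrite addn1.
  apply: runs_le; first apply: IH; rewrite ?(addSnnS X) //; try lia.
    by rewrite differ_inS // CX orbF.
  by rewrite /= neqb CX.
run_next Hc; first exact/eqP.
run Hc; run_jump Hc => //; run Hc; run_jump Hc => //; rewrite addn1.
apply: runs_le; first apply: IH; rewrite ?(addSnnS X) //; try lia.
  have CX1 : bit C X == 1 by move: CX (bit_le1 C X); case: (bit C X) => [|[|]].
  by rewrite differ_inS // CX1 neqb orbT.
by rewrite /= neqb (negbTE CX).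
Qed.

Definition inner_post J (st : {set 'I_n} * nat) : nat -> memory -> Prop :=
  fun pc mm => pc = o + 52 /\ exists H t11 t12 t13 t14 t15 t16, heap_ok H st.1 /\
   mm = with_regs [:: n; m; k; 1; 0; CB; st.2; J; R0 + J * n; m; R0 + m * n; t11; t12; t13; t14;
                  t15; t16; R0] H.

Lemma insert_ok C cnt I J H (t12 t13 t14 : nat) (Q : nat -> memory -> Prop) b :
  heap_ok H C ->
  (forall H' t12', heap_ok H' (greedy_step E k (C, cnt) I J).1 ->
    runs P (o + 17)
      (with_regs [:: n; m; k; 1; 0; CB; (greedy_step E k (C, cnt) I J).2; J; R0 + J * n;
         I.+1; R0 + I.+1 * n; n; t12'; t13; t14; nat_of_bool (differ_in C (edge E I) (edge E J) n);
         split_point C (edge E I) (edge E J) n; R0] H') Q b) ->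
  runs P (o + 40)
    (with_regs [:: n; m; k; 1; 0; CB; cnt; J; R0 + J * n; I; R0 + I * n; n; t12; t13; t14;
       nat_of_bool (differ_in C (edge E I) (edge E J) n); split_point C (edge E I) (edge E J) n;
       R0] H)
    Q (11 + b).
Proof.
have next_row : R0 + I * n + n = R0 + I.+1 * n by rewrite mulSnr addnA.
rewrite /greedy_step; move=> ok; case df: (differ_in _ _ _ _) => /= cont.
  run_next Hc => //; run_jump Hc => //; run Hc; run Hc; run_jump Hc => //.
  by rewrite addn1 next_row; apply: runs_le (cont _ _ ok) _; lia.
run_jump Hc => //; have [sp0 | sp_gt0] := eqVneq (split_point C (edge E I) (edge E J) n) 0.
  rewrite sp0 in cont *; run_jump Hc => //; run Hc; run Hc; run_jump Hc => //.
  by rewrite addn1 next_row; apply: runs_le (cont _ _ ok) _; lia.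
rewrite sp_gt0 in cont; run_next Hc; first exact/eqP.
run Hc; have [full | not_full] := eqVneq (k - cnt) 0.
  rewrite full in cont *; run_jump Hc => //; run Hc; run Hc; run_jump Hc => //.
  by rewrite addn1 next_row; apply: runs_le (cont _ _ ok) _; lia.
rewrite not_full in cont; run_next Hc; first exact/eqP.
case sp: (split_point _ _ _ _) sp_gt0 cont => [|s] // _ cont.
have [ltsn _ _] := split_pointS sp.
run Hc; run Hc; rewrite (_ : CB + s.+1 - 1 = CB + s); last by rewrite subn1 addnS.
run Hc; first by rewrite /CB /nregs; lia.
run Hc; run Hc; run Hc; run_jump Hc => //.
by rewrite !addn1 next_row; apply: cont; apply: heap_ok_set_bit.
Qed.

Lemma inner_loop_ok r C cnt I J H t11 t12 t13 t14 t15 t16 :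
  I + r = m -> J < m -> heap_ok H C ->
  runs P (o + 17)
   (with_regs [:: n; m; k; 1; 0; CB; cnt; J; R0 + J * n; I; R0 + I * n; t11; t12; t13; t14;
                  t15; t16; R0] H)
   (inner_post J (greedy_inner E k (C, cnt) J I r)) (2 + r * (18 + 17 * n)).
Proof.
elim: r C cnt I H t11 t12 t13 t14 t15 t16 => [|r IH] C cnt I H t11 t12 t13 t14 t15 t16 Irm ltJm ok.
  rewrite addn0 in Irm; subst I.
  run Hc; run_jump Hc; first by rewrite subnn.
  by apply: runs_now; split=> //; exists H, t11, (m - m), t13, t14, t15, t16.
have ltIm : I < m by rewrite -Irm -addSnnS leq_addr.
rewrite (_ : 2 + _ = 5 + ((2 + 17 * n) + (11 + (2 + r * (18 + 17 * n))))); last first.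
  by rewrite mulSn; lia.
run Hc; run_next Hc; first lia.
run Hc; run Hc; run Hc.
apply: runs_seq; first by apply: (@scan_loop_ok n C cnt I J 0 H); rewrite ?differ_in0.
move=> _ _ [-> [t12' [t13' [t14' ->]]]].
rewrite (_ : greedy_inner _ _ _ _ _ _ =
             greedy_inner E k (greedy_step E k (C, cnt) I J) J I.+1 r) //.
apply: insert_ok => // H' t12''.
by case: (greedy_step E k (C, cnt) I J) => C' cnt' ok'; apply: IH; rewrite ?addSnnS.
Qed.

Definition outer_post (st : {set 'I_n} * nat) : nat -> memory -> Prop :=
  fun pc mm => pc = o + 55 /\ exists H t9 t10 t11 t12 t13 t14 t15 t16, heap_ok H st.1 /\
   mm = with_regs [:: n; m; k; 1; 0; CB; st.2; m; R0 + m * n; t9; t10; t11; t12; t13; t14;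
                  t15; t16; R0] H.

Lemma outer_loop_ok r C cnt J H t9 t10 t11 t12 t13 t14 t15 t16 :
  J + r = m -> heap_ok H C ->
  runs P (o + 13)
   (with_regs [:: n; m; k; 1; 0; CB; cnt; J; R0 + J * n; t9; t10; t11; t12; t13; t14;
                  t15; t16; R0] H)
   (outer_post (greedy_outer E k (C, cnt) J r)) (2 + r * (9 + m * (18 + 17 * n))).
Proof.
elim: r C cnt J H t9 t10 t11 t12 t13 t14 t15 t16
  => [|r IH] C cnt J H t9 t10 t11 t12 t13 t14 t15 t16 Jrm ok.
  rewrite addn0 in Jrm; subst J.
  run Hc; run_jump Hc; first by rewrite subnn.
  by apply: runs_now; split=> //; exists H, t9, t10, t11, (m - m), t13, t14, t15, t16.
have ltJm : J < m by lia.
set t := 18 + 17 * n.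
rewrite (_ : 2 + _ = 4 + ((2 + m * t) + (3 + (2 + r * (9 + m * t))))); last first.
  by rewrite mulSn; set u := m * t; set v := r * _; lia.
run Hc; run_next Hc; first lia.
run Hc; run Hc.
apply: runs_seq; first exact: (@inner_loop_ok m C cnt 0 J H).
move=> _ _ [-> [H' [t11' [t12' [t13' [t14' [t15' [t16' [ok' ->]]]]]]]]].
rewrite (_ : greedy_outer _ _ _ _ _ = greedy_outer E k (greedy_inner E k (C, cnt) J 0 m) J.+1 r) //.
have next_row : R0 + J * n + n = R0 + J.+1 * n by rewrite mulSnr addnA.
case: (greedy_inner E k (C, cnt) J 0 m) ok' => C' cnt' /= ok'.
run Hc; run Hc; run_jump Hc => //.
by rewrite addn1 next_row; apply: IH; rewrite ?addSnnS.
Qed.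

Definition pad_post (st : {set 'I_n} * nat) : nat -> memory -> Prop :=
  fun pc mm => pc = o + 68 /\ exists H t7 t8 t9 t10 t11 t12 t13 t14 t15 t16, heap_ok H st.1 /\
   mm = with_regs [:: n; m; k; 1; 0; CB; st.2; t7; t8; t9; t10; t11; t12; t13; t14;
                  t15; t16; R0] H.

Lemma pad_loop_ok r C cnt X H t7 t8 t9 t10 t12 t13 t14 t15 t16 :
  X + r = n -> heap_ok H C -> cnt <= k ->
  runs P (o + 56)
   (with_regs [:: n; m; k; 1; 0; CB; cnt; t7; t8; t9; t10; X; t12; t13; t14;
                  t15; t16; R0] H)
   (pad_post (pad k (C, cnt) X r)) (4 + 11 * r).
Proof.
elim: r C cnt X H t12 t13 => [|r IH] C cnt X H t12 t13 Xrn ok le_cnt_k.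
  rewrite addn0 in Xrn; subst X.
  run Hc; run_jump Hc; first by rewrite subnn.
  by apply: runs_now; split=> //; exists H, t7, t8, t9, t10, n, (n - n), t13, t14, t15, t16.
have ltXn : X < n by lia.
rewrite (_ : pad _ _ _ _ = pad k (pad_step k (C, cnt) X) X.+1 r) //.
rewrite (_ : 4 + _ = 15 + 11 * r); last by lia.
run Hc; run_next Hc; first lia.
run Hc; have [full | not_full] := eqVneq (k - cnt) 0.
  have cnt_k : cnt = k by lia.
  subst cnt; rewrite /pad_step full /= pad_full.
  run_jump Hc => //.
  by apply: runs_now; split=> //; exists H, t7, t8, t9, t10, X, 0, t13, t14, t15, t16.
run_next Hc; first exact/eqP.
run Hc; run Hc; first by rewrite /CB /nregs; lia.
rewrite ok.2 /pad_step not_full; have [CX | CX] := eqVneq (bit C X) 0.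
  rewrite CX; run_jump Hc => //; run Hc; first by rewrite /CB /nregs; lia.
  run Hc; run Hc; run_jump Hc => //.
  rewrite !addn1; apply: runs_le; first apply: IH; rewrite ?(addSnnS X) //; try lia.
  exact: heap_ok_set_bit.
run_next Hc; first exact/eqP.
run_jump Hc => //; run Hc; run_jump Hc => //.
by rewrite !addn1; apply: runs_le; first apply: IH; rewrite ?(addSnnS X).
Qed.

Definition output_post C : nat -> memory -> Prop :=
  fun pc mm => pc = o + 76 /\ exists H t6 t7 t8 t9 t10 t11 t12 t13 t14 t15 t16, heap_ok H C /\
   (forall y, 18 <= y < n -> H y = bit C y) /\
   mm = with_regs [:: n; m; k; 1; 0; CB; t6; t7; t8; t9; t10; t11; t12; t13; t14;
                  t15; t16; R0] H.

Lemma output_loop_ok r C X H t6 t7 t8 t9 t10 t12 t13 t14 t15 t16 :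
  X + r = n -> 18 <= X -> heap_ok H C -> (forall y, 18 <= y < X -> H y = bit C y) ->
  runs P (o + 69)
   (with_regs [:: n; m; k; 1; 0; CB; t6; t7; t8; t9; t10; X; t12; t13; t14;
                  t15; t16; R0] H)
   (output_post C) (2 + 7 * r).
Proof.
elim: r X H t12 => [|r IH] X H t12 Xrn le18X ok out.
  rewrite addn0 in Xrn; subst X.
  run Hc; run_jump Hc; first by rewrite subnn.
  by apply: runs_now; split=> //; exists H, t6, t7, t8, t9, t10, n, (n - n), t13, t14, t15, t16.
have ltXn : X < n by lia.
rewrite (_ : 2 + _ = 9 + 7 * r); last by lia.
run Hc; run_next Hc; first lia.
run Hc; run Hc; first by rewrite /CB /nregs; lia.
rewrite ok.2; run Hc; first by rewrite /nregs; lia.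
run Hc; run_jump Hc => //.
rewrite addn1; apply: IH; rewrite ?(addSnnS X) //; try lia.
  by apply: heap_ok_store ok _; lia.
by move=> y Yy; rewrite /upd; case: eqP => [-> // | ne]; apply: out; lia.
Qed.

Lemma output_ok C H t6 t7 t8 t9 t10 t11 t12 t13 t14 t15 t16 :
  heap_ok H C ->
  runs P (o + 68)
   (with_regs [:: n; m; k; 1; 0; CB; t6; t7; t8; t9; t10; t11; t12; t13; t14;
                  t15; t16; R0] H)
   (output_post C) (1 + (2 + 7 * n)).
Proof.
move=> ok; run Hc; have [le18n | ltn18] := leqP 18 n.
  by apply: runs_le; first apply: (output_loop_ok (r := n - 18)); rewrite ?subnKC //; lia.
run Hc; run_jump Hc; first lia.
apply: runs_now; split=> //.
by exists H, t6, t7, t8, t9, t10, 18, (n - 18), t13, t14, t15, t16; do !split=> //; lia.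
Qed.

Lemma init_ok H t2 t3 t4 t5 t6 t7 t8 t9 t10 t11 t12 t13 t14 t15 t16 t17 :
  (forall a, H (B + a) = encode E k a) ->
  runs P (o + 0)
   (with_regs [:: B; L; t2; t3; t4; t5; t6; t7; t8; t9; t10; t11; t12; t13; t14; t15; t16; t17] H)
   (fun pc mm => pc = o + 13 /\ heap_ok H set0 /\ exists t9 t10 t11 t12 t13 t14 t15 t16,
      mm = with_regs [:: n; m; k; 1; 0; CB; 0; 0; R0 + 0 * n; t9; t10; t11; t12; t13; t14;
                  t15; t16; R0] H) 13.
Proof.
move=> input.
have inputn : H B = n by rewrite -[B]addn0 input.
have inputm : H (B + 1) = m by rewrite input.
have inputk : H (B + 1 + 1) = k by rewrite -addnA input.
do 6 run Hc; run Hc; first by rewrite /nregs; lia.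
rewrite inputm; run Hc; run Hc; first by rewrite /nregs; lia.
rewrite inputk; run Hc; first by rewrite /nregs; lia.
rewrite inputn; run Hc; run Hc; run Hc.
apply: runs_now; split=> //; split.
  split=> [a _ | x]; first exact: input.
  rewrite /CB -addnA input encode_ge; last by rewrite /L; lia.
  by rewrite /bit; case: existsP => // [[y /andP [_]]]; rewrite inE.
by exists t9, t10, t11, (B + 1 + 1), t13, t14, t15, t16; rewrite (addnC 3 B).
Qed.

Lemma restore_ok C H t6 t7 t8 t9 t10 t11 t12 t13 t14 t15 t16 :
  heap_ok H C -> (forall y, 18 <= y < n -> H y = bit C y) ->
  runs P (o + 76)
   (with_regs [:: n; m; k; 1; 0; CB; t6; t7; t8; t9; t10; t11; t12; t13; t14;
                  t15; t16; R0] H)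
   (fun pc mm => nth IHalt P pc = IHalt /\ forall x, x < n -> mm x = bit C x) 53.
Proof.
move=> [_ vecC] out; do 53 (run Hc; try by rewrite /CB /L /nregs; lia).
apply: runs_now; split=> [|x ltxn]; first by rewrite Hc.
rewrite /with_regs; case: ifP => [ltx18 | /negbT]; last first.
  by rewrite /nregs -leqNgt => le18x; apply: out; lia.
rewrite -vecC /nregs in ltx18 *.
by do 18 (case: x ltxn ltx18 => [|x] ltxn ltx18; first by rewrite /= ?addn0 ?(addnC _ CB)).
Qed.

Lemma main_code_ok H t2 t3 t4 t5 t6 t7 t8 t9 t10 t11 t12 t13 t14 t15 t16 t17 :
  (forall a, H (B + a) = encode E k a) -> k <= n ->
  runs P (o + 0)
   (with_regs [:: B; L; t2; t3; t4; t5; t6; t7; t8; t9; t10; t11; t12; t13; t14; t15; t16; t17] H)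
   (fun pc mm => nth IHalt P pc = IHalt /\ forall x, x < n -> mm x = bit (greedy_set E k) x)
   (main_time n m).
Proof.
move=> input le_k_n; apply: runs_seq; first exact: init_ok.
move=> _ _ [-> [ok [? [? [? [? [? [? [? [? ->]]]]]]]]]].
apply: runs_seq; first exact: (@outer_loop_ok m set0 0 0).
move=> _ _ [-> [H1 [? [? [? [? [? [? [? [? [ok1 ->]]]]]]]]]]].
have [[_ le_cnt_k _] _] := greedy_phase_spec E k.
rewrite /greedy_set; case: greedy_outer le_cnt_k ok1 => C1 cnt1 /= le_cnt_k ok1.
run Hc; apply: runs_seq; first exact: (@pad_loop_ok n C1 cnt1 0).
move=> _ _ [-> [H2 [? [? [? [? [? [? [? [? [? [? [ok2 ->]]]]]]]]]]]]].
apply: runs_seq; first exact: output_ok ok2.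
move=> _ _ [-> [H3 [? [? [? [? [? [? [? [? [? [? [? [ok3 [out ->]]]]]]]]]]]]]]].
exact: restore_ok.
Qed.

End Main.

Definition relocate_time n m := 3 + (1 + 5 * m + (6 + (2 + 8 * (3 + m * n) + 25))).

(* The input occupies cells [0, 3 + |E| n), overlapping the registers.  The
   leaf copies it above every cell the main code uses, to [Bv], but it needs
   registers 3 to 7 as scratch before copying; the five input bits they hold
   are known in advance, having been recorded in the program counter by a
   depth-5 tree of tests. *)
Definition relocate_leaf (o : nat) (bs : seq bool) (mp : nat) : program := [::
(*0*) IConst 3 0; IConst 5 1; ISub 4 1 3;
(*3*) IJz 4 (o + 8); IAdd 3 3 0; ISub 4 4 5; IConst 6 0; IJz 6 (o + 3);
(*8*) IConst 7 3; IAdd 3 3 7; IConst 6 18; IAdd 6 6 3; IAdd 6 6 0; IConst 4 0;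
(*14*) ISub 7 3 4; IJz 7 (o + 22); ILoad 7 4; IStore 6 7; IAdd 4 4 5; IAdd 6 6 5;
(*20*) IConst 7 0; IJz 7 (o + 14);
(*22*) ISub 6 6 3;
(*23*) IConst 7 3; IAdd 7 7 6; IConst 4 (nth false bs 0); IStore 7 4;
(*27*) IConst 7 4; IAdd 7 7 6; IConst 4 (nth false bs 1); IStore 7 4;
(*31*) IConst 7 5; IAdd 7 7 6; IConst 4 (nth false bs 2); IStore 7 4;
(*35*) IConst 7 6; IAdd 7 7 6; IConst 4 (nth false bs 3); IStore 7 4;
(*39*) IConst 7 7; IAdd 7 7 6; IConst 4 (nth false bs 4); IStore 7 4;
(*43*) IConst 4 0; IAdd 0 6 4; IAdd 1 3 4; IJz 4 mp ].

Section Leaf.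
Variables (P : program) (o mp : nat) (bs : seq bool) (n : nat) (E : {set {set 'I_n}}) (k : nat).
Hypothesis Hc : code_at P o (relocate_leaf o bs mp).
Let m := #|E|.
Let e := encode E k.
Let L := 3 + m * n.
Let Bv := 18 + L + n.

Lemma mul_loop_ok c acc t6 r3 H (Q : nat -> memory -> Prop) b :
  (forall t6', runs P (o + 8) (with_regs [:: n; m; k; acc + c * n; 0; 1; t6'; r3;
       e 8; e 9; e 10; e 11; e 12; e 13; e 14; e 15; e 16; e 17] H) Q b) ->
  runs P (o + 3) (with_regs [:: n; m; k; acc; c; 1; t6; r3;
       e 8; e 9; e 10; e 11; e 12; e 13; e 14; e 15; e 16; e 17] H) Q (1 + 5 * c + b).
Proof.
elim: c acc t6 => [|c IH] acc t6 cont.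
  by run_jump Hc => //; rewrite addn0 in cont; apply: cont.
rewrite (_ : 1 + _ + b = 5 + (1 + 5 * c + b)); last by lia.
run_next Hc => //; run Hc; run Hc; run Hc; run_jump Hc => //.
rewrite subn1 /=; apply: IH => t6'.
by rewrite (_ : acc + n + c * n = acc + c.+1 * n) ?mulSn; [apply: cont | lia].
Qed.

Definition low_intact (H : memory) := forall a, a < Bv -> H a = e a.

Definition copied_upto (H : memory) j :=
  forall a, a < 3 \/ 8 <= a -> H (Bv + a) = if a < j then e a else 0.

Lemma read_input j H t7 : low_intact H -> j < L -> j < 3 \/ 8 <= j ->
  with_regs [:: n; m; k; L; j; 1; Bv + j; t7;
    e 8; e 9; e 10; e 11; e 12; e 13; e 14; e 15; e 16; e 17] H j = e j.
Proof.
move=> low ltjL j_not_scratch; have [ltj18 | le18j] := ltnP j 18; last first.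
  by rewrite with_regs_hi // low // /Bv; lia.
rewrite with_regs_lo //.
by do 18 (case: j j_not_scratch ltj18 ltjL => [|j] j_not_scratch ltj18 ltjL; first by [lia|]).
Qed.

Lemma copy_loop_ok r j t7 H (Q : nat -> memory -> Prop) b :
  j + r = L -> low_intact H -> copied_upto H j ->
  (forall H' t7', low_intact H' -> copied_upto H' L ->
     runs P (o + 22) (with_regs [:: n; m; k; L; L; 1; Bv + L; t7';
       e 8; e 9; e 10; e 11; e 12; e 13; e 14; e 15; e 16; e 17] H') Q b) ->
  runs P (o + 14) (with_regs [:: n; m; k; L; j; 1; Bv + j; t7;
       e 8; e 9; e 10; e 11; e 12; e 13; e 14; e 15; e 16; e 17] H) Q (2 + 8 * r + b).
Proof.
elim: r j t7 H => [|r IH] j t7 H jrL low copied cont.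
  rewrite addn0 in jrL; subst j.
  by run Hc; run_jump Hc; [rewrite subnn | apply: cont].
have ltjL : j < L by lia.
rewrite (_ : 2 + _ + b = 8 + (2 + 8 * r + b)); last by lia.
run Hc; run_next Hc; first lia.
eapply (@runs_load_any _ _ _ 16 _ _ _ _ _ _ Hc);
  [reflexivity|reflexivity|reflexivity|reflexivity|norm].
set v := with_regs _ H j.
run Hc; first by rewrite /nregs /Bv; lia.
run Hc; run Hc; run Hc; run_jump Hc => //.
rewrite addn1 -addnA addn1; apply: IH => //; first lia.
  by move=> a ltaB; rewrite /upd; case: eqP => [| _]; [lia | apply: low].
move=> a a_not_scratch; rewrite /upd ltnS leq_eqVlt; case: eqP => [/addnI eqaj | neq].
  by subst a; rewrite eqxx /v read_input.
by rewrite copied // (_ : (a == j) = false) //; apply/eqP => eqaj; apply: neq; rewrite eqaj.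
Qed.

Hypothesis bits : forall i, i < 5 -> nat_of_bool (nth false bs i) = e (3 + i).

Definition relocated : nat -> memory -> Prop :=
  fun pc mm => pc = mp /\ exists H t3 t4 t5 t6 t7,
   (forall a, H (Bv + a) = e a) /\
   mm = with_regs [:: Bv + 0; L + 0; k; t3; t4; t5; t6; t7;
       e 8; e 9; e 10; e 11; e 12; e 13; e 14; e 15; e 16; e 17] H.

Lemma relocate_leaf_ok t3 t4 t5 t6 t7 :
  runs P (o + 0) (with_regs [:: n; m; k; t3; t4; t5; t6; t7;
       e 8; e 9; e 10; e 11; e 12; e 13; e 14; e 15; e 16; e 17] e) relocated
    (relocate_time n m).
Proof.
run Hc; run Hc; run Hc; rewrite subn0.
apply: mul_loop_ok => t6'.
do 6 run Hc.
have -> : 18 + (0 + m * n + 3) + n = Bv + 0 by rewrite /Bv /L; lia.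
have -> : 0 + m * n + 3 = L by rewrite /L; lia.
apply: copy_loop_ok => //.
  by move=> a _; rewrite /e encode_ge // /Bv /L; lia.
move=> H t7' low copied; run Hc; rewrite (_ : Bv + L - L = Bv); last by lia.
do 20 (run Hc; try by rewrite /nregs /Bv; lia).
run Hc; run Hc; run Hc; run_jump Hc => //.
apply: runs_now; split=> //; do 6 eexists; split; last reflexivity.
move=> a; rewrite /upd; have [lta3 | le3a] := ltnP a 3.
  rewrite !ifN_eq; try lia.
  by rewrite copied ?lta3 /L; [case: ifP; lia | left].
have [lta8 | le8a] := ltnP a 8; last first.
  rewrite !ifN_eq; try lia.
  rewrite copied; last by right.
  by case: ifP => // /negbT; rewrite -leqNgt /e => le_L_a; rewrite encode_ge.
have : a = 3 \/ a = 4 \/ a = 5 \/ a = 6 \/ a = 7 by lia.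
by case=> [->|[->|[->|[->|->]]]]; rewrite (addnC Bv) !eqn_add2r /=; apply: bits.
Qed.

End Leaf.

Fixpoint tree_size d := if d is d'.+1 then (tree_size d' + tree_size d').+1 else 47.

Fixpoint relocate_tree (d o : nat) (bs : seq bool) (mp : nat) : program :=
  if d is d'.+1 then
    IJz (3 + size bs) (o.+1 + tree_size d') ::
      (relocate_tree d' o.+1 (rcons bs true) mp ++
       relocate_tree d' (o.+1 + tree_size d') (rcons bs false) mp)
  else relocate_leaf o bs mp.

Lemma size_relocate_tree d o bs mp : size (relocate_tree d o bs mp) = tree_size d.
Proof. by elim: d o bs => [|d IH] o bs //=; rewrite size_cat !IH. Qed.

Lemma with_regs_split (M : memory) : M = with_regs (mkseq M 18) M.
Proof.
apply: functional_extensionality => a.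
by rewrite /with_regs; case: ifP => // lta18; rewrite nth_mkseq.
Qed.

Section Tree.
Variables (P : program) (mp : nat) (n : nat) (E : {set {set 'I_n}}) (k : nat).
Let e := encode E k.

Lemma relocate_tree_ok d o bs : size bs + d = 5 -> code_at P o (relocate_tree d o bs mp) ->
  (forall i, i < size bs -> nat_of_bool (nth false bs i) = e (3 + i)) ->
  runs P o (with_regs (mkseq e 18) e) (relocated mp E k) (d + relocate_time n #|E|).
Proof.
elim: d o bs => [|d IH] o bs size_bs Hc bits.
  by rewrite -(addn0 o); apply: (relocate_leaf_ok Hc); rewrite -size_bs addn0.
have lt_bs5 : size bs < 5 by lia.
have Hc1 : code_at P o.+1 (relocate_tree d o.+1 (rcons bs true) mp).
  exact: code_at_catl (code_at_cons Hc).
have Hc2 : code_at P (o.+1 + tree_size d)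
                    (relocate_tree d (o.+1 + tree_size d) (rcons bs false) mp).
  by have := code_at_catr (code_at_cons Hc); rewrite size_relocate_tree.
have record b : nat_of_bool b = e (3 + size bs) ->
    forall i, i < size (rcons bs b) -> nat_of_bool (nth false (rcons bs b) i) = e (3 + i).
  move=> eb i; rewrite size_rcons ltnS leq_eqVlt nth_rcons => /orP [/eqP -> | lti].
    by rewrite ltnn eqxx.
  by rewrite lti bits.
have size_rcons_bs b : size (rcons bs b) + d = 5 by rewrite size_rcons addSnnS.
rewrite -(addn0 o); have [e0 | e1] := eqVneq (e (3 + size bs)) 0.
  eapply (@runs_jump _ _ _ 0 (3 + size bs) (o.+1 + tree_size d) _ _ _ _ Hc) => //.
    by rewrite /nregs; lia.
    by rewrite nth_mkseq //; lia.
  by apply: (IH _ (rcons bs false)) => //; apply: record; rewrite e0.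
eapply (@runs_next _ _ _ 0 (3 + size bs) (o.+1 + tree_size d) _ _ _ _ Hc) => //.
  by rewrite /nregs; lia.
  by rewrite nth_mkseq //; [apply/eqP | lia].
rewrite addn1; apply: (IH _ (rcons bs true)) => //; apply: record.
by move: e1 (encode_le1 E k (leq_addr (size bs) 3)); rewrite /e; case: encode => [|[|]].
Qed.

End Tree.

Definition main_pc := tree_size 5.
Definition pvc_prog : program := relocate_tree 5 0 [::] main_pc ++ main_code main_pc.

Lemma code_pvc_tree : code_at pvc_prog 0 (relocate_tree 5 0 [::] main_pc).
Proof. by apply: (@code_at_catl _ _ _ (main_code main_pc)) => i _; rewrite add0n. Qed.

Lemma code_pvc_main : code_at pvc_prog main_pc (main_code main_pc).
Proof.
have := @code_at_catr pvc_prog 0 (relocate_tree 5 0 [::] main_pc) (main_code main_pc).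
by rewrite size_relocate_tree add0n; apply=> i _; rewrite add0n.
Qed.

Definition pvc_time n m := (5 + relocate_time n m) + main_time n m.

Lemma pvc_prog_ok (n : nat) (E : {set {set 'I_n}}) (k : nat) : k <= n ->
  runs pvc_prog 0 (encode E k)
    (fun pc m => nth IHalt pvc_prog pc = IHalt /\ decode n m = greedy_set E k)
    (pvc_time n #|E|).
Proof.
move=> le_k_n; rewrite (with_regs_split (encode E k)).
apply: runs_seq; first exact: (@relocate_tree_ok _ _ n E k 5 0 [::] (erefl 5) code_pvc_tree).
move=> _ _ [-> [H [t3 [t4 [t5 [t6 [t7 [relocH ->]]]]]]]].
rewrite !addn0 -[main_pc]addn0.
apply: runs_post; first apply: (main_code_ok (B := 18 + (3 + #|E| * n) + n) code_pvc_main) => //.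
  by rewrite leq_add2r leq_addr.
move=> pc m [halt outC]; split=> //.
by apply/setP => x; rewrite inE (outC _ (ltn_ord x)) bit_ord; case: (x \in _).
Qed.

Lemma card_edges_le (n : nat) (E : {set {set 'I_n}}) : #|E| <= 1 + #|E| * n.
Proof.
case: n E => [|n] E; last by rewrite mulnS; lia.
rewrite muln0 addn0 -(cards1 (set0 : {set 'I_0})); apply/subset_leq_card/subsetP => A _.
by rewrite inE; apply/eqP/setP => [[]].
Qed.

Lemma pvc_time_le (n : nat) (E : {set {set 'I_n}}) (k : nat) :
  pvc_time n #|E| <= input_size E k ^ 6.
Proof.
rewrite /pvc_time /relocate_time /main_time /input_size.
set m := #|E|; set s := 3 + n + m * n + k.
have le_m_s : m <= s by have := card_edges_le E; rewrite -/m /s; lia.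
have le_n_s : n <= s by rewrite /s; lia.
have le_mn_s : m * n <= s by rewrite /s; lia.
have le_3_s : 3 <= s by rewrite /s; lia.
have le_mmn : m * (m * n) <= s * s by apply: leq_mul.
have le_mm : m * m <= s * s by apply: leq_mul.
have -> : m * (9 + m * (18 + 17 * n)) = 9 * m + 18 * (m * m) + 17 * (m * (m * n)) by ring.
have le_s_ss : s <= s * s by rewrite leq_pmulr //; lia.
suff : 81 * (s * s) <= s ^ 6 by lia.
rewrite (_ : s ^ 6 = (s * s) * (s * s) * (s * s)) ?leq_mul2r; last first.
  by rewrite !expnS expn0 muln1 !mulnA.
apply/orP; right; have le_9_ss : 9 <= s * s by apply: (@leq_mul 3 3).
exact: leq_trans (leq_mul le_9_ss le_9_ss).
Qed.

Theorem corollary3 (d : nat) (hd : 1 <= d) :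
  exists (P : program) (c : nat),
    forall (n : nat) (E : {set {set 'I_n}}) (k : nat),
      vc_dim E <= d -> k <= n ->
      exists m : memory,
        exec P (input_size E k ^ c) 0 (encode E k) = Some m /\
        #|decode n m| = k /\
        opt_pvc E k ^ d <= nb_classes E (decode n m) ^ d * #|E| ^ (d - 1).
Proof.
exists pvc_prog, 6 => n E k vcEd le_k_n.
have [m [decC exec_m]] := runs_halt (pvc_prog_ok E le_k_n).
exists m; split; first exact: exec_m (pvc_time_le E k).
have [cardC nbC] := greedy_spec E le_k_n.
by rewrite decC; split=> //; apply: partial_vc_approx.
Qed.
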